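(* Let $a,b$ be integers with $b>a>2$ and $\gcd(a,b)=1$. Then for every integer $c\geq (a-1)(b-1)$ there exists a tame polynomial automorphism $F$ of $\mathbb{C}^3$ with $\operatorname{mdeg}F=(a,b,c)$.
   Context: For a polynomial automorphism $F=(F_1,\ldots,F_n)$ of $\mathbb{C}^n$, its multidegree is $\operatorname{mdeg}F:=(\deg F_1,\ldots,\deg F_n)$, where $\deg$ is total degree. A map $F=(F_1,\ldots,F_n)$ is elementary if for some $j\leq n$ and some polynomial $g$ in $n-1$ variables, $F_j=X_j+g(X_1,\ldots,\widehat{X_j},\ldots,X_n)$ and $F_i=X_i$ for $i\neq j$. A polynomial automorphism is tame if it is a composition of invertible affine-linear maps and elementary maps. *)

(* Polynomials in 3 variables X1 X2 X3 over algC, encoded as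
   nested univariate polynomials: {poly {poly {poly algC}}}, with
   X1 = innermost variable, X2 = middle, X3 = outermost. *)
From HB Require Import structures.
From mathcomp Require Import all_boot all_order all_algebra all_field.
Set Implicit Arguments. Unset Strict Implicit. Unset Printing Implicit Defensive.
Import Order.TTheory GRing.Theory Num.Theory.
Local Open Scope ring_scope.

Definition mpoly3 := {poly {poly {poly algC}}}.

Definition mC (c : algC) : mpoly3 := c%:P%:P%:P.

Definition X1 : mpoly3 := 'X%:P%:P.
Definition X2 : mpoly3 := 'X%:P.
Definition X3 : mpoly3 := 'X.

Definition Xv (i : 'I_3) : mpoly3 :=
  match val i with 0%N => X1 | 1%N => X2 | _ => X3 end.

(* coefficient of X1^k1 X2^k2 X3^k3 *)
Definition coef3 (p : mpoly3) (k1 k2 k3 : nat) : algC := p`_k3`_k2`_k1.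

Definition expo (j : 'I_3) (k1 k2 k3 : nat) : nat :=
  match val j with 0%N => k1 | 1%N => k2 | _ => k3 end.

(* total degree (total degree of 0 is set to 0) *)
Definition tdeg2 (q : {poly {poly algC}}) : nat :=
  \max_(i < size q | (q`_i != 0)%R) (i + (size (q`_i)%R).-1)%N.
Definition tdeg (p : mpoly3) : nat :=
  \max_(i < size p | (p`_i != 0)%R) (i + tdeg2 (p`_i)%R)%N.

Definition subst3 (p : mpoly3) (g1 g2 g3 : mpoly3) : mpoly3 :=
  \sum_(i < size p) \sum_(j < size p`_i) \sum_(k < size p`_i`_j)
     mC (p`_i`_j`_k) * g1 ^+ k * g2 ^+ j * g3 ^+ i.

Definition pmap3 := 'I_3 -> mpoly3.

Definition comp3 (F G : pmap3) : pmap3 :=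
  fun i => subst3 (F i) (G (inord 0)) (G (inord 1)) (G (inord 2)).

Definition mdeg (F : pmap3) : nat * nat * nat :=
  (tdeg (F (inord 0)), tdeg (F (inord 1)), tdeg (F (inord 2))).

Definition affine_inv (F : pmap3) : Prop :=
  exists (A : 'M[algC]_3) (b : 'I_3 -> algC), A \in unitmx /\
    forall i, F i = \sum_(j < 3) mC (A i j) * Xv j + mC (b i).

Definition elementary (F : pmap3) : Prop :=
  exists (j : 'I_3) (g : mpoly3),
    (forall k1 k2 k3, (0 < expo j k1 k2 k3)%N -> coef3 g k1 k2 k3 = 0) /\
    F j = Xv j + g /\ (forall i, i != j -> F i = Xv i).

Inductive tame : pmap3 -> Prop :=
  | tame_affine F : affine_inv F -> tame F
  | tame_elem F : elementary F -> tame F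
  | tame_comp F G : tame F -> tame G -> tame (comp3 F G).

From mathcomp Require Import all_boot all_order all_algebra all_field.
From mathcomp Require Import zify ring.
Set Implicit Arguments. Unset Strict Implicit. Unset Printing Implicit Defensive.
Import GRing.Theory.
Local Open Scope ring_scope.

(* Write c = i a + j b with i, j >= 0 (Frobenius coin problem; this is where
   c >= (a - 1)(b - 1) and gcd(a, b) = 1 are used).  Then F = H o E1 o E2 with
   the elementary maps
     E2 = (X1, X2 + X3^b, X3),  E1 = (X1 + X3^a, X2, X3),
     H  = (X1, X2, X3 + X1^i X2^j)
   is tame and equals (X1 + X3^a, X2 + X3^b, X3 + (X1 + X3^a)^i (X2 + X3^b)^j),
   whose components have total degrees a, b and i a + j b = c. *)

(* Multiplication by b permutes the residues modulo a: some j < a has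
   j * b = c modulo a.  With u * b = -1 (mod a) from Bezout, take
   j = c * (a - 1) * u mod a. *)
Lemma residue_mul_coprime a b c : (0 < a)%N -> coprime a b ->
  exists2 j, (j < a)%N & (j * b = c %[mod a])%N.
Proof.
move=> a_gt0 coab; have [u _ ub_m1] := Bezoutl b a_gt0.
rewrite (eqP coab) in ub_m1.
exists (c * (a - 1) * u %% a)%N; first by rewrite ltn_mod.
rewrite modnMml; apply/eqP; rewrite -(eqn_modDr (c * (a - 1))).
have -> : (c * (a - 1) * u * b + c * (a - 1) = c * (a - 1) * (1 + u * b))%N
  by ring.
have -> : (c + c * (a - 1) = c * a)%N by nia.
by rewrite -modnMmr (eqP ub_m1) muln0 mod0n modnMl.
Qed.

Lemma frobenius_coin a b c : (0 < a)%N -> coprime a b ->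
  ((a - 1) * (b - 1) <= c)%N -> exists i j, c = (i * a + j * b)%N.
Proof.
move=> a_gt0 coab c_ge; have [j j_lt jb_c] := residue_mul_coprime c a_gt0 coab.
(* j * b exceeding c would exceed it by a multiple of a, hence by >= a,
   contradicting j * b <= (a - 1) * b <= c + a - 1. *)
have jb_le : (j * b <= c)%N.
  rewrite leqNgt; apply/negP => c_lt.
  have a_dvd : (a %| j * b - c)%N by rewrite -eqn_mod_dvd ?jb_c // ltnW.
  have gap_pos : (0 < j * b - c)%N by rewrite subn_gt0.
  have := dvdn_leq gap_pos a_dvd; nia.
exists ((c - j * b) %/ a)%N, j.
by rewrite divnK ?subnK // -eqn_mod_dvd // jb_c.
Qed.

Lemma horner_morph_sum (R S : nzRingType) (f : {rmorphism R -> S}) u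
    (cfu : commr_rmorph f u) p :
  horner_morph cfu p = \sum_(i < size p) f p`_i * u ^+ i.
Proof.
rewrite /horner_morph (@horner_coef_wide _ (size p)); last exact: size_poly.
by apply: eq_bigr => i _; rewrite coef_map.
Qed.

Section Evaluation.
Variables g1 g2 g3 : mpoly3.

Let mC_rmorph : {rmorphism algC -> mpoly3} := polyC \o polyC \o polyC.
Let comm1 : commr_rmorph mC_rmorph g1. Proof. by move=> x; apply: mulrC. Qed.
Let ev1 : {rmorphism {poly algC} -> mpoly3} := horner_morph comm1.
Let comm2 : commr_rmorph ev1 g2. Proof. by move=> x; apply: mulrC. Qed.
Let ev2 : {rmorphism {poly {poly algC}} -> mpoly3} := horner_morph comm2.
Let comm3 : commr_rmorph ev2 g3. Proof. by move=> x; apply: mulrC. Qed.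

Definition ev : {rmorphism mpoly3 -> mpoly3} := horner_morph comm3.

Lemma subst3E p : subst3 p g1 g2 g3 = ev p.
Proof.
rewrite /ev /= (horner_morph_sum comm3); apply: eq_bigr => i _.
rewrite /ev2 /= (horner_morph_sum comm2) big_distrl; apply: eq_bigr => j _.
rewrite /ev1 /= (horner_morph_sum comm1) !big_distrl; apply: eq_bigr => k _.
by rewrite /mC /mC_rmorph.
Qed.

Lemma evX1 : ev X1 = g1.
Proof.
by rewrite /ev /X1 /= (horner_morphC comm3) /ev2 /= (horner_morphC comm2) /ev1 /=
  (horner_morphX comm1).
Qed.

Lemma evX2 : ev X2 = g2.
Proof. by rewrite /ev /X2 /= (horner_morphC comm3) /ev2 /= (horner_morphX comm2). Qed.

Lemma evX3 : ev X3 = g3.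
Proof. by rewrite /ev /X3 /= (horner_morphX comm3). Qed.

End Evaluation.

Lemma comp3E (F G : pmap3) k :
  comp3 F G k = ev (G (inord 0)) (G (inord 1)) (G (inord 2)) (F k).
Proof. exact: subst3E. Qed.

Definition map3 (f1 f2 f3 : mpoly3) : pmap3 :=
  fun i => match val i with 0%N => f1 | 1%N => f2 | _ => f3 end.

Lemma map3_0 f1 f2 f3 : map3 f1 f2 f3 (inord 0) = f1.
Proof. by rewrite /map3 /= inordK. Qed.
Lemma map3_1 f1 f2 f3 : map3 f1 f2 f3 (inord 1) = f2.
Proof. by rewrite /map3 /= inordK. Qed.
Lemma map3_2 f1 f2 f3 : map3 f1 f2 f3 (inord 2) = f3.
Proof. by rewrite /map3 /= inordK. Qed.
Definition map3E := (map3_0, map3_1, map3_2).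

Lemma elementary_X1 g : (forall k1 k2 k3, (0 < k1)%N -> coef3 g k1 k2 k3 = 0) ->
  elementary (map3 (X1 + g) X2 X3).
Proof. by move=> g_free; exists ord0, g; do 2?split => //; case=> -[|[|[|]]]. Qed.

Lemma elementary_X2 g : (forall k1 k2 k3, (0 < k2)%N -> coef3 g k1 k2 k3 = 0) ->
  elementary (map3 X1 (X2 + g) X3).
Proof.
by move=> g_free; exists (Ordinal (isT : 1 < 3)%N), g; do 2?split => //;
  case=> -[|[|[|]]].
Qed.

Lemma elementary_X3 g : (forall k1 k2 k3, (0 < k3)%N -> coef3 g k1 k2 k3 = 0) ->
  elementary (map3 X1 X2 (X3 + g)).
Proof. by move=> g_free; exists ord_max, g; do 2?split => //; case=> -[|[|[|]]]. Qed.

Lemma coef3_X3n n k1 k2 k3 : (0 < k1 + k2)%N -> coef3 (X3 ^+ n) k1 k2 k3 = 0.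
Proof.
move=> k12_gt0; rewrite /coef3 /X3 coefXn; case: (k3 == n); last by rewrite !coef0.
by rewrite coef1; case: k2 k12_gt0 => [|k2] /=; rewrite ?coef0 // coef1; case: k1.
Qed.

Lemma coef3_polyC (q : {poly {poly algC}}) k1 k2 k3 : (0 < k3)%N ->
  coef3 q%:P k1 k2 k3 = 0.
Proof. by rewrite /coef3 coefC; case: k3 => // k3 _; rewrite !coef0. Qed.

(* A filtration [G] on a semiring assigns to each [d] the
   predicate "has degree at most d"; it is lifted to polynomials by giving the
   new variable degree 1.  Three lifts of the trivial filtration on algC
   yield "total degree at most d" on mpoly3. *)
Record filtration (R : nzSemiRingType) (G : nat -> R -> Prop) := {
  filt0 : forall d, G d 0;
  filtD : forall d x y, G d x -> G d y -> G d (x + y);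
  filt_mono : forall d e x, (d <= e)%N -> G d x -> G e x;
  filtM : forall d e x y, G d x -> G e y -> G (d + e)%N (x * y);
  filt1 : G 0%N 1 }.

Arguments filtD {R G} _ {d x y}.
Arguments filt_mono {R G} _ {d e x}.
Arguments filtM {R G} _ {d e x y}.

Definition poly_filt (R : nzSemiRingType) (G : nat -> R -> Prop) d (p : {poly R}) :=
  forall i, if (i <= d)%N then G (d - i)%N p`_i else p`_i = 0.

Section PolyFiltration.
Variables (R : nzSemiRingType) (G : nat -> R -> Prop) (filtG : filtration G).

Lemma filtXn d x n : G d x -> G (n * d)%N (x ^+ n).
Proof.
move=> Gx; elim: n => [|n IH]; first by rewrite expr0; apply: filt1.
by rewrite exprS mulSn; apply: filtM.
Qed.

Lemma poly_filtM d e x y :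
  poly_filt G d x -> poly_filt G e y -> poly_filt G (d + e) (x * y).
Proof.
move=> Gx Gy i; rewrite coefM.
have term (k : 'I_i.+1) : x`_k * y`_(i - k) = 0 \/
    [/\ (k <= d)%N, (i - k <= e)%N & G (d + e - i) (x`_k * y`_(i - k))].
  have k_le := ltn_ord k; move: (Gx k) (Gy (i - k)%N).
  case: (leqP k d) => k_d; last by move=> -> _; left; rewrite mul0r.
  case: (leqP (i - k) e) => k_e; last by move=> _ ->; left; rewrite mulr0.
  move=> Gxk Gyk; right; split=> //.
  by apply: (filt_mono filtG _ (filtM filtG Gxk Gyk)); lia.
case: leqP => i_de.
  apply: (big_ind (G _)) => [|u v|k _]; [exact: filt0 | exact: filtD |].
  by case: (term k) => [-> | [_ _ //]]; apply: filt0.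
apply: big1 => k _; case: (term k) => [// | [k_d k_e _]].
by have := ltn_ord k; lia.
Qed.

Lemma poly_filtration : filtration (poly_filt G).
Proof.
split.
- by move=> d i; rewrite coef0; case: ifP => // _; apply: filt0.
- move=> d x y Gx Gy i; rewrite coefD; move: (Gx i) (Gy i); case: ifP => _.
    exact: filtD.
  by move=> -> ->; rewrite addr0.
- move=> d e x d_e Gx i; move: (Gx i); case: (leqP i d) => i_d.
    by rewrite (leq_trans i_d d_e) => Gxi; apply: (filt_mono filtG _ Gxi); lia.
  by move=> ->; case: ifP => // _; apply: filt0.
- exact: poly_filtM.
- by case=> [|i]; rewrite coef1 //=; apply: filt1.
Qed.

Lemma poly_filtC d c : G d c -> poly_filt G d c%:P.
Proof.
move=> Gc [|i]; rewrite coefC /= ?subn0 //.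
by case: ifP => // _; apply: filt0.
Qed.

Lemma poly_filtX : poly_filt G 1 'X.
Proof. by case=> [|[|i]]; rewrite coefX //=; [apply: filt0 | apply: filt1]. Qed.

End PolyFiltration.

Definition deg1_le : nat -> {poly algC} -> Prop := poly_filt (fun _ _ => True).
Definition deg2_le : nat -> {poly {poly algC}} -> Prop := poly_filt deg1_le.
Definition deg3_le : nat -> mpoly3 -> Prop := poly_filt deg2_le.

Lemma deg1_filtration : filtration deg1_le. Proof. by apply: poly_filtration. Qed.
Lemma deg2_filtration : filtration deg2_le.
Proof. exact: poly_filtration deg1_filtration. Qed.
Lemma deg3_filtration : filtration deg3_le.
Proof. exact: poly_filtration deg2_filtration. Qed.

Lemma deg3_X1 : deg3_le 1 X1.
Proof.
apply: (poly_filtC deg2_filtration); apply: (poly_filtC deg1_filtration).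
by apply: poly_filtX.
Qed.
Lemma deg3_X2 : deg3_le 1 X2.
Proof. exact: (poly_filtC deg2_filtration) (poly_filtX deg1_filtration). Qed.
Lemma deg3_X3 : deg3_le 1 X3.
Proof. exact: poly_filtX deg2_filtration. Qed.

Lemma size_deg1_le d r : deg1_le d r -> (size r <= d.+1)%N.
Proof. by move=> Gr; apply/leq_sizeP => j j_gt; move: (Gr j); rewrite leqNgt j_gt. Qed.

Lemma tdeg2_le d q : deg2_le d q -> (tdeg2 q <= d)%N.
Proof.
move=> Gq; apply/bigmax_leqP => -[i /= _] nz_qi; move: (Gq i); case: leqP => i_d.
  by move/size_deg1_le; rewrite -leq_subRL //; case: (size _).
by move=> qi0; rewrite qi0 eqxx in nz_qi.
Qed.

Lemma tdeg_le d p : deg3_le d p -> (tdeg p <= d)%N.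
Proof.
move=> Gp; apply/bigmax_leqP => -[i /= _] nz_pi; move: (Gp i); case: leqP => i_d.
  by move/tdeg2_le; rewrite -leq_subRL.
by move=> pi0; rewrite pi0 eqxx in nz_pi.
Qed.

Lemma tdeg_ge c (p : mpoly3) : p`_c != 0 -> (c <= tdeg p)%N.
Proof.
move=> nz_pc; have c_lt : (c < size p)%N.
  by rewrite ltnNge; apply: contra nz_pc => /leq_sizeP->.
exact: leq_trans (leq_addr _ _) (leq_bigmax_cond (Ordinal c_lt) nz_pc).
Qed.

Lemma tdeg_eq n (p : mpoly3) : deg3_le n p -> p`_n != 0 -> tdeg p = n.
Proof. by move=> Gp nz_pn; apply/eqP; rewrite eqn_leq tdeg_le ?tdeg_ge. Qed.

Lemma deg3_X3n n : deg3_le n (X3 ^+ n).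
Proof. by have := filtXn deg3_filtration n deg3_X3; rewrite muln1. Qed.

Lemma monic_addX3n (q : {poly {poly algC}}) n : (0 < n)%N -> q%:P + X3 ^+ n \is monic.
Proof. by move=> n_gt0; rewrite addrC monicXnaddC. Qed.

Lemma size_addX3n (q : {poly {poly algC}}) n : (0 < n)%N -> size (q%:P + X3 ^+ n) = n.+1.
Proof. by move=> n_gt0; rewrite addrC size_XnaddC. Qed.

Lemma tdeg_addX3n (q : {poly {poly algC}}) n : (0 < n)%N -> deg3_le n q%:P ->
  tdeg (q%:P + X3 ^+ n) = n.
Proof.
move=> n_gt0 Gq; apply: tdeg_eq; first exact: (filtD deg3_filtration Gq (deg3_X3n n)).
by rewrite coefD coefC coefXn eqxx gtn_eqF // add0r oner_neq0.
Qed.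

Lemma size_monic_powers (R : idomainType) (p q : {poly R}) m n i j :
  p \is monic -> q \is monic -> size p = m.+1 -> size q = n.+1 ->
  size (p ^+ i * q ^+ j) = (i * m + j * n)%N.+1.
Proof.
have size_pow (r : {poly R}) k : r \is monic -> size (r ^+ k) = ((size r).-1 * k)%N.+1.
  by move=> mon_r; rewrite -size_exp prednK // size_poly_gt0 monic_neq0 ?monic_exp.
move=> mon_p mon_q size_p size_q.
rewrite size_monicM ?monic_exp ?monic_neq0 ?monic_exp // !size_pow // size_p size_q /=.
by rewrite addnS mulnC [(n * j)%N]mulnC.
Qed.

(* The last component X3 + (X1 + X3^a)^i (X2 + X3^b)^j has total degree
   i a + j b, attained by its leading term in X3. *)
Lemma tdeg_top a b i j : (0 < a)%N -> (0 < b)%N -> (1 < i * a + j * b)%N ->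
  tdeg (X3 + (X1 + X3 ^+ a) ^+ i * (X2 + X3 ^+ b) ^+ j) = (i * a + j * b)%N.
Proof.
move=> a_gt0 b_gt0 c_gt1.
have GA : deg3_le a (X1 + X3 ^+ a).
  exact: (filtD deg3_filtration (filt_mono deg3_filtration a_gt0 deg3_X1)
                                (deg3_X3n a)).
have GB : deg3_le b (X2 + X3 ^+ b).
  exact: (filtD deg3_filtration (filt_mono deg3_filtration b_gt0 deg3_X2)
                                (deg3_X3n b)).
apply: tdeg_eq.
  apply: (filtD deg3_filtration (filt_mono deg3_filtration (ltnW c_gt1) deg3_X3)).
  exact: (filtM deg3_filtration (filtXn deg3_filtration i GA)
                               (filtXn deg3_filtration j GB)).
have mon_A : X1 + X3 ^+ a \is monic := monic_addX3n _ a_gt0.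
have mon_B : X2 + X3 ^+ b \is monic := monic_addX3n _ b_gt0.
have := size_monic_powers i j mon_A mon_B (size_addX3n _ a_gt0) (size_addX3n _ b_gt0).
move=> /(congr1 predn) /= size_AB.
rewrite coefD /X3 coefX gtn_eqF // add0r -size_AB -lead_coefE.
by rewrite (monicP (rpredM (monic_exp i mon_A) (monic_exp j mon_B))) oner_neq0.
Qed.

Theorem fact2 (a b c : nat) :
  (2 < a)%N -> (a < b)%N -> coprime a b -> ((a - 1) * (b - 1) <= c)%N ->
  exists F : pmap3, tame F /\ mdeg F = (a, b, c).
Proof.
move=> a_gt2 a_lt_b coab c_ge.
have a_gt0 : (0 < a)%N by lia.
have b_gt0 : (0 < b)%N by lia.
have [i [j c_eq]] := frobenius_coin a_gt0 coab c_ge.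
have c_gt1 : (1 < i * a + j * b)%N by rewrite -c_eq; nia.
pose E1 := map3 (X1 + X3 ^+ a) X2 X3.
pose E2 := map3 X1 (X2 + X3 ^+ b) X3.
pose H := map3 X1 X2 (X3 + X1 ^+ i * X2 ^+ j).
exists (comp3 H (comp3 E1 E2)); split.
  apply: tame_comp; [|apply: tame_comp]; apply: tame_elem.
  - apply: elementary_X3 => k1 k2 k3.
    have -> : X1 ^+ i * X2 ^+ j = (('X%:P) ^+ i * 'X ^+ j)%:P.
      by rewrite rmorphM !rmorphXn.
    exact: coef3_polyC.
  - by apply: elementary_X1 => k1 k2 k3 k1_gt0; apply: coef3_X3n; lia.
  - by apply: elementary_X2 => k1 k2 k3 k2_gt0; apply: coef3_X3n; lia.
have E12_0 : comp3 E1 E2 (inord 0) = X1 + X3 ^+ a.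
  by rewrite comp3E /E1 /E2 !map3E rmorphD rmorphXn evX1 evX3.
have E12_1 : comp3 E1 E2 (inord 1) = X2 + X3 ^+ b.
  by rewrite comp3E /E1 /E2 !map3E evX2.
have E12_2 : comp3 E1 E2 (inord 2) = X3 by rewrite comp3E /E1 /E2 !map3E evX3.
have deg_A : tdeg (X1 + X3 ^+ a) = a.
  exact: tdeg_addX3n _ a_gt0 (filt_mono deg3_filtration a_gt0 deg3_X1).
have deg_B : tdeg (X2 + X3 ^+ b) = b.
  exact: tdeg_addX3n _ b_gt0 (filt_mono deg3_filtration b_gt0 deg3_X2).
rewrite /mdeg !(comp3E H) E12_0 E12_1 E12_2 /H !map3E evX1 evX2.
by rewrite rmorphD rmorphM !rmorphXn evX1 evX2 evX3 deg_A deg_B c_eq tdeg_top.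
Qed.
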